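(* Let $F$ be Richard Thompson's group with standard generators $x_0,x_1,x_2,\ldots$. Let $k\ge1$, let $i_1,\ldots,i_k$ be even nonnegative integers, let $j_1,\ldots,j_k$ be odd positive integers, and let $\epsilon_1,\delta_1,\ldots,\epsilon_k,\delta_k\in\{1,-1\}$. Then the word $x_{i_1}^{\epsilon_1}x_{j_1}^{\delta_1}x_{i_2}^{\epsilon_2}x_{j_2}^{\delta_2}\cdots x_{i_k}^{\epsilon_k}x_{j_k}^{\delta_k}$ does not represent the identity element of $F$.
   Context: Thompson's group $F$ is the group given by the presentation $\langle x_0,x_1,x_2,\ldots \mid x_jx_i=x_ix_{j+1}\ (0\le i<j)\rangle$. *)

From mathcomp Require Import all_boot.
Set Implicit Arguments. Unset Strict Implicit. Unset Printing Implicit Defensive.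

(* Thompson's group F given by the presentation
   < x_0, x_1, ... | x_j x_i = x_i x_(j+1)  (0 <= i < j) >.
   A letter (n, true) stands for x_n, (n, false) for x_n^-1.
   Words are sequences of letters; F is the quotient of the set of words by
   the congruence generated by free cancellation and the defining relations. *)
Definition letter := (nat * bool)%type.
Definition linv (a : letter) : letter := (a.1, ~~ a.2).

Inductive Fequiv : seq letter -> seq letter -> Prop :=
| Fe_refl w : Fequiv w w
| Fe_sym u v : Fequiv u v -> Fequiv v u
| Fe_trans u v w : Fequiv u v -> Fequiv v w -> Fequiv u w
| Fe_cancel (u v : seq letter) (a : letter) :
    Fequiv (u ++ a :: linv a :: v) (u ++ v)
| Fe_rel (u v : seq letter) (i j : nat) : i < j ->
    Fequiv (u ++ [:: (j, true); (i, true)] ++ v)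
           (u ++ [:: (i, true); (j.+1, true)] ++ v).

Definition represents_identity (w : seq letter) : Prop := Fequiv w [::].

Definition gen_pow (n : nat) (b : bool) : letter := (n, b).

From mathcomp Require Import all_boot.
From mathcomp Require Import zify.
From Stdlib Require Import FunctionalExtensionality Classical.
Set Implicit Arguments. Unset Strict Implicit. Unset Printing Implicit Defensive.

(* F acts on the Cantor space of infinite 0/1-sequences: x_0 maps 0t, 10t, 11t
   to 00t, 01t, 1t, and x_(n+1) fixes 0t and maps 1t to 1 x_n(t).  This action
   respects the defining relations, so a word representing 1 acts trivially;
   we show that the given word does not.
   The word alternates in the parity of its indices.  A pinch x_a^-1 m x_a
   (all indices of m above a) has the action of m with indices raised by one,
   and a pinch x_a m x_a^-1 (all indices of m above a+1) that of m with indices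
   lowered by one.  Replacing a pinch shortens the word, keeps it alternating,
   and keeps it nonempty (m has odd length, its end letters having equal
   parity); so the word acts like a nonempty reduced word: alternating and
   free of pinches.  Finally a nonempty reduced word acts nontrivially: after
   lowering all indices we may assume it contains x_0^(+-1); if the exponent
   sum of x_0 is nonzero it moves a point 0^N 1 0 0 ..., and otherwise it has
   the shape L x_0 h x_0^-1 R where h is a raised reduced word, which moves a
   point by induction on the length. *)

(** * The action of F on the Cantor space *)

Definition stream := nat -> bool.
Definition scons (b : bool) (s : stream) : stream :=
  fun k => if k is k'.+1 then s k' else b.
Definition stl (s : stream) : stream := fun k => s k.+1.

Lemma stream_eta (s : stream) : s = scons (s 0) (stl s).
Proof. by apply: functional_extensionality; case. Qed.

Lemma stream_eta2 (s : stream) : s = scons (s 0) (scons (s 1) (stl (stl s))).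
Proof. by apply: functional_extensionality; do 2?case. Qed.

(* x_0 and its inverse: 0t <-> 00t, 10t <-> 01t, 11t <-> 1t. *)
Definition x0_act (s : stream) : stream :=
  if s 0 then (if s 1 then stl s else scons false (scons true (stl (stl s))))
  else scons false s.
Definition x0_inv_act (s : stream) : stream :=
  if s 0 then scons true s
  else if s 1 then scons true (scons false (stl (stl s)))
  else stl s.

Fixpoint gen_act (n : nat) (e : bool) (s : stream) : stream :=
  match n with
  | 0 => if e then x0_act s else x0_inv_act s
  | n'.+1 => if s 0 then scons true (gen_act n' e (stl s)) else s
  end.

Definition word_act (w : seq letter) (s : stream) : stream :=
  foldr (fun l s => gen_act l.1 l.2 s) s w.

Lemma x0_actK : cancel x0_act x0_inv_act.
Proof. by move=> s; rewrite (stream_eta2 s); case: (s 0); case: (s 1). Qed.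

Lemma x0_inv_actK : cancel x0_inv_act x0_act.
Proof. by move=> s; rewrite (stream_eta2 s); case: (s 0); case: (s 1). Qed.

Lemma gen_actK n e s : gen_act n (~~ e) (gen_act n e s) = s.
Proof.
elim: n s => [|n IH] s /=; first by case: e; rewrite ?x0_actK ?x0_inv_actK.
case s0: (s 0) => /=; rewrite ?s0 // IH.
by rewrite [in RHS](stream_eta s) s0.
Qed.

Lemma gen_act_rel i j e s :
  i < j -> gen_act j e (gen_act i true s) = gen_act i true (gen_act j.+1 e s).
Proof.
elim: i j s => [|i IH] [|j] s //= lt_ij.
  by rewrite (stream_eta2 s); case: (s 0); case: (s 1).
by case s0: (s 0) => /=; rewrite ?s0 //= IH.
Qed.

Lemma word_act_cons l w s : word_act (l :: w) s = gen_act l.1 l.2 (word_act w s).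
Proof. by []. Qed.

Lemma word_act_cat u v s : word_act (u ++ v) s = word_act u (word_act v s).
Proof. by rewrite /word_act foldr_cat. Qed.

Lemma word_act_Fequiv u v : Fequiv u v -> forall s, word_act u s = word_act v s.
Proof.
elim=> [w|{}u {}v _ IH|{}u {}v w _ IH1 _ IH2|{}u {}v [n e]|{}u {}v i j lt_ij] s.
- by [].
- by rewrite IH.
- by rewrite IH1 IH2.
- by rewrite !word_act_cat /= -{1}[e]negbK gen_actK.
- by rewrite !word_act_cat /= gen_act_rel.
Qed.

Definition shift_word (w : seq letter) : seq letter :=
  map (fun l : letter => (l.1.+1, l.2)) w.
Definition unshift_word (w : seq letter) : seq letter :=
  map (fun l : letter => (l.1.-1, l.2)) w.

Definition above (a : nat) (w : seq letter) : bool := all (fun l : letter => a < l.1) w.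

Lemma above_shift a w : above a.+1 (shift_word w) = above a w.
Proof. by rewrite /above all_map. Qed.

Lemma above_pos a w : above a w -> above 0 w.
Proof. by apply: sub_all => l /=; lia. Qed.

Lemma unshift_wordK w : above 0 w -> shift_word (unshift_word w) = w.
Proof. by elim: w => //= [[n e]] w IH /andP[/= n_gt0 /IH ->]; case: n n_gt0. Qed.

Lemma word_act_shift w s : word_act (shift_word w) (scons true s) = scons true (word_act w s).
Proof. by elim: w => //= l w ->. Qed.

(** * Alternating words and the removal of pinches *)

Fixpoint alternating (c : bool) (w : seq letter) : bool :=
  if w is l :: w' then (odd l.1 == c) && alternating (~~ c) w' else true.

Definition alt (w : seq letter) : Prop := exists c, alternating c w.

Lemma alternating_cat c x y :
  alternating c (x ++ y) = alternating c x && alternating (c (+) odd (size x)) y.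
Proof.
elim: x c => [|l x IH] c /=; first by rewrite addbF.
by rewrite IH andbA; case: c; case: (odd (size x)).
Qed.

Lemma alternating_shift c w : alternating c (shift_word w) = alternating (~~ c) w.
Proof. by elim: w c => //= l w IH c; rewrite IH; case: c; case: (odd l.1). Qed.

(* Two letters of equal index in an alternating word enclose a subword m of
   odd length; replacing them and m by a word of that length and the opposite
   parity pattern keeps the word alternating and nonempty. *)
Lemma alternating_pinch c x m m' y a b b' :
  alternating c (x ++ (a, b) :: m ++ (a, b') :: y) ->
  size m' = size m -> (forall d, alternating d m' = alternating (~~ d) m) ->
  alternating c (x ++ m' ++ y) /\ m' <> [::].
Proof.
rewrite !alternating_cat /= alternating_cat /= => alt_w size_m' alt_m'.
rewrite alt_m' size_m'; split.
  by move: alt_w; case: c; case: (odd a); case: (odd (size x));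
     case: (odd (size m)); rewrite /= ?andbF ?andbT.
have odd_m : odd (size m).
  by move: alt_w; case: c; case: (odd a); case: (odd (size x));
     case: (odd (size m)); rewrite /= ?andbF.
by move=> m'_nil; rewrite -size_m' m'_nil in odd_m.
Qed.

Definition neg_pinch (w : seq letter) : Prop := exists x m y a,
  w = x ++ (a, false) :: m ++ (a, true) :: y /\ above a m.
Definition pos_pinch (w : seq letter) : Prop := exists x m y a,
  w = x ++ (a, true) :: m ++ (a, false) :: y /\ above a.+1 m.

Definition reduced (w : seq letter) : Prop := [/\ alt w, ~ neg_pinch w & ~ pos_pinch w].

(* x_a^-1 m x_a = shift(m) when m is above a (iterating the defining relation). *)
Lemma word_act_conj a m s :
  above a m -> word_act m (gen_act a true s) = gen_act a true (word_act (shift_word m) s).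
Proof. by elim: m => //= l m IH /andP[lt_al /IH ->]; rewrite gen_act_rel. Qed.

Lemma word_act_neg_pinch a m y s : above a m ->
  word_act ((a, false) :: m ++ (a, true) :: y) s = word_act (shift_word m ++ y) s.
Proof.
move=> m_a; rewrite /= !word_act_cat /= word_act_conj //.
by rewrite -[false]/(~~ true) gen_actK.
Qed.

Lemma word_act_pos_pinch a u y s : above a u ->
  word_act ((a, true) :: shift_word u ++ (a, false) :: y) s = word_act (u ++ y) s.
Proof.
move=> u_a; rewrite /= !word_act_cat /=.
by rewrite -[in RHS](gen_actK a false (word_act y s)) /= word_act_conj.
Qed.

Lemma reduce n w : size w <= n -> alt w -> w <> [::] ->
  exists w', [/\ reduced w', w' <> [::] & forall s, word_act w' s = word_act w s].
Proof.
elim: n w => [|n IH] w size_w [c alt_w] w_ne.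
  by rewrite leqn0 size_eq0 in size_w; move/eqP: size_w.
have pinch x m m' y a b b' : w = x ++ (a, b) :: m ++ (a, b') :: y ->
    size m' = size m -> (forall d, alternating d m' = alternating (~~ d) m) ->
    (forall s, word_act ((a, b) :: m ++ (a, b') :: y) s = word_act (m' ++ y) s) ->
  exists w', [/\ reduced w', w' <> [::] & forall s, word_act w' s = word_act w s].
  move=> def_w size_m' alt_m' act_m'.
  have [alt_w' m'_ne] : alternating c (x ++ m' ++ y) /\ m' <> [::].
    by rewrite def_w in alt_w; apply: alternating_pinch alt_w size_m' alt_m'.
  have size_w' : size (x ++ m' ++ y) <= n.
    by move: size_w; rewrite def_w !size_cat /= size_cat /= size_m' /letter; lia.
  have w'_ne : x ++ m' ++ y <> [::].
    by move/nilP; rewrite !cat_nilp => /and3P[_ /nilP].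
  have [w' [red_w' w'_ne' act_w']] := IH _ size_w' (ex_intro _ c alt_w') w'_ne.
  by exists w'; split => // s; rewrite act_w' def_w !(word_act_cat x) act_m'.
case: (classic (neg_pinch w)) => [[x [m [y [a [def_w m_a]]]]]|no_neg].
  apply: (pinch x m (shift_word m) y a false true def_w); first exact: size_map.
    by move=> d; rewrite alternating_shift.
  by move=> s; rewrite word_act_neg_pinch.
case: (classic (pos_pinch w)) => [[x [m [y [a [def_w m_a]]]]]|no_pos].
  have m_pos := above_pos m_a.
  rewrite -(unshift_wordK m_pos) in def_w m_a; rewrite above_shift in m_a.
  apply: (pinch x _ (unshift_word m) y a true false def_w); first by rewrite !size_map.
    by move=> d; rewrite alternating_shift negbK.
  by move=> s; rewrite word_act_pos_pinch.
by exists w; split => //; split => //; exists c.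
Qed.

Lemma reduced_sub x y z : reduced (x ++ y ++ z) -> reduced y.
Proof.
case=> [[c alt_w] no_neg no_pos]; split.
- exists (c (+) odd (size x)).
  by move: alt_w; rewrite !alternating_cat => /andP[_ /andP[]].
- move=> [x' [m [y' [a [def_y m_a]]]]]; apply: no_neg.
  by exists (x ++ x'), m, (y' ++ z), a; rewrite def_y -!catA /= -catA.
- move=> [x' [m [y' [a [def_y m_a]]]]]; apply: no_pos.
  by exists (x ++ x'), m, (y' ++ z), a; rewrite def_y -!catA /= -catA.
Qed.

Lemma reduced_shift y : reduced (shift_word y) -> reduced y.
Proof.
case=> [[c alt_y] no_neg no_pos]; split.
- by exists (~~ c); rewrite -alternating_shift.
- move=> [x' [m [y' [a [def_y m_a]]]]]; apply: no_neg.
  exists (shift_word x'), (shift_word m), (shift_word y'), a.+1.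
  by rewrite above_shift m_a def_y /shift_word map_cat /= map_cat.
- move=> [x' [m [y' [a [def_y m_a]]]]]; apply: no_pos.
  exists (shift_word x'), (shift_word m), (shift_word y'), a.+1.
  by rewrite above_shift m_a def_y /shift_word map_cat /= map_cat.
Qed.

(** * Reduced words act nontrivially *)

Notation x0 := ((0, true) : letter).
Notation x0inv := ((0, false) : letter).

Definition n_x0 (w : seq letter) : nat := count_mem x0 w.
Definition n_x0inv (w : seq letter) : nat := count_mem x0inv w.

Lemma above0E w : above 0 w = ~~ has (fun l : letter => l.1 == 0) w.
Proof. by rewrite -all_predC; apply: eq_all => l /=; rewrite lt0n. Qed.

Lemma above0_x0 w b : above 0 w -> (0, b) \notin w.
Proof. by move=> /allP w_pos; apply/negP => /w_pos. Qed.

Lemma n_x0_pos w : ~~ above 0 w -> 0 < n_x0 w + n_x0inv w.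
Proof.
rewrite /n_x0 /n_x0inv; elim: w => //= [[[|n] [|]]] w IH //=; lia.
Qed.

Lemma gen_act_fix_head n e s : s 0 = false -> gen_act n.+1 e s = s.
Proof. by move=> /= ->. Qed.

Lemma gen_act_second n e s : gen_act n.+2 e s 1 = s 1.
Proof.
rewrite /=; case s0: (s 0) => //=.
by rewrite /stl /=; case s1: (s 1) => /=; rewrite ?s1.
Qed.

Lemma gen_act_fix_second n e s : s 1 = false -> gen_act n.+2 e s = s.
Proof.
move=> s1; rewrite /=; case s0: (s 0) => //.
by rewrite {1}/stl /= s1 [in RHS](stream_eta s) s0.
Qed.

Lemma gen_act_iter_x0 k n e s :
  0 < n -> gen_act n e (iter k x0_act s) = iter k x0_act (gen_act (n + k) e s).
Proof.
elim: k n => [|k IH] n n_gt0 /=; first by rewrite addn0.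
by rewrite (gen_act_rel _ _ n_gt0) IH // addSnnS.
Qed.

Lemma iter_x0_inj k : injective (iter k x0_act).
Proof. by elim: k => //= k IH s t /(can_inj x0_actK) /IH. Qed.

Lemma iter_x0_head k s : s 1 = false -> 0 < k -> iter k x0_act s 0 = false.
Proof.
move=> s1; elim: k => // [[|k]] IH _; rewrite iterS /x0_act.
  by rewrite /= s1; case: (s 0).
by rewrite IH.
Qed.

Definition spike (N : nat) : stream := fun k => k == N.

Lemma x0_act_spike N : x0_act (spike N) = spike N.+1.
Proof.
apply: functional_extensionality => k.
by case: N => [|N]; rewrite /x0_act /spike /=; case: k => [|[|k]].
Qed.

Lemma spike_inj : injective spike.
Proof. by move=> a b /(congr1 (fun s => s a)); rewrite /spike eqxx => /esym/eqP. Qed.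

Lemma word_act_spike w N : n_x0 w + n_x0inv w <= N ->
  word_act w (spike N.+1) = spike (N.+1 + n_x0 w - n_x0inv w).
Proof.
rewrite /n_x0 /n_x0inv; elim: w => [|[n e] w IH] /= size_w.
  by rewrite addn0 subn0.
rewrite IH; last by move: size_w; case: n => [|n]; case: e => /=; lia.
case: n size_w => [|n] size_w; last first.
  by rewrite gen_act_fix_head ?addn0 //= /spike; apply/negbTE; lia.
case: e size_w => /= size_w; first by rewrite x0_act_spike; congr spike; lia.
set N' := _ - _; have -> : N' = (N' - 1).+1 by rewrite /N'; lia.
by rewrite -x0_act_spike x0_actK; congr spike; rewrite /N'; lia.
Qed.

Lemma unbalanced_nontrivial w : n_x0 w != n_x0inv w ->
  exists2 q : stream, q 0 = false & word_act w q <> q.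
Proof.
move=> unbal; exists (spike (n_x0 w + n_x0inv w).+1) => //.
by rewrite word_act_spike // => /spike_inj; move: unbal => /eqP; lia.
Qed.

Lemma split_first_find (T : Type) (p : pred T) (s : seq T) : has p s ->
  exists s1 x s2, [/\ s = s1 ++ x :: s2, p x & ~~ has p s1].
Proof.
elim: s => //= x s IH; case: (boolP (p x)) => [px _|pNx /IH [s1 [y [s2 [-> py hNs1]]]]].
  by exists [::], x, s.
by exists (x :: s1), y, s2; rewrite /= (negbTE pNx).
Qed.

Lemma split_last_find (T : Type) (p : pred T) (s : seq T) : has p s ->
  exists s1 x s2, [/\ s = s1 ++ x :: s2, p x & ~~ has p s2].
Proof.
elim: s => //= x s IH ps; case: (boolP (has p s)) => [/IH [s1 [y [s2 [-> py hNs2]]]]|hNs].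
  by exists (x :: s1), y, s2.
by exists [::], x, s; move: ps; rewrite (negbTE hNs) orbF.
Qed.

Lemma no_x0_after_x0inv w u v : ~ neg_pinch w -> w = u ++ x0inv :: v -> x0 \notin v.
Proof.
move=> no_neg; elim: {v}(size v).+1 {-2}v (ltnSn (size v)) u => // n IH v size_v u def_w.
case: (boolP (has (fun l : letter => l.1 == 0) v)); last by rewrite -above0E => /above0_x0.
case/split_first_find => h [[z b] [v' [def_v /= /eqP z0 h_zero]]]; subst z.
rewrite -above0E in h_zero.
case: b def_v => def_v.
  by case: no_neg; exists u, h, v', 0; rewrite def_w def_v.
rewrite def_v mem_cat (negbTE (above0_x0 true h_zero)) in_cons /=.
apply: (IH _ _ (u ++ x0inv :: h)); last by rewrite def_w def_v -catA.
by move: size_v; rewrite def_v size_cat /=; lia.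
Qed.

Lemma balanced_split w : ~ neg_pinch w -> x0 \in w -> x0inv \in w ->
  exists L h R, [/\ w = rcons L x0 ++ h ++ x0inv :: R, x0inv \notin L,
                    above 0 h & x0 \notin R].
Proof.
move=> no_neg x0_w; rewrite -has_pred1 => /split_first_find.
case=> A [z [R [def_w /eqP z_x0inv A_x0inv]]]; subst z.
have R_x0 := no_x0_after_x0inv no_neg def_w.
have A_zero : has (fun l : letter => l.1 == 0) A.
  move: x0_w; rewrite def_w mem_cat in_cons (negbTE R_x0) !orbF => x0_A.
  by apply/hasP; exists x0.
case/split_last_find: A_zero def_w A_x0inv => L [[z b] [h [-> /= /eqP z0 h_zero]]].
subst z; rewrite has_pred1 mem_cat in_cons !negb_or => def_w /and3P[L_x0inv b_x0inv _].
case: b b_x0inv def_w => // _ def_w.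
exists L, h, R; split => //; last by rewrite above0E.
by rewrite def_w -cats1 -!catA.
Qed.

Lemma word_act_prefix L s : x0inv \notin L -> exists s',
  [/\ word_act (rcons L x0) s = iter (n_x0 L).+1 x0_act s', s' 1 = s 1
    & (s 1 = false -> s' = s)].
Proof.
elim: L => [|l L IH] L_x0inv; first by exists s.
move: L_x0inv; rewrite in_cons negb_or => /andP[l_x0inv /IH [s' [act_L s'1 s'_s]]].
rewrite rcons_cons word_act_cons act_L.
case: l l_x0inv => [[|n] e] l_x0inv.
  by case: e l_x0inv => // _; exists s'.
exists (gen_act (n + n_x0 L).+2 e s'); split.
- by rewrite gen_act_iter_x0 // addSn addnS.
- by rewrite gen_act_second.
- by move=> s1; rewrite gen_act_fix_second ?s'_s // s'1.
Qed.

Lemma word_act_suffix R s : x0 \notin R -> s 1 = false ->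
  word_act (x0inv :: R) (iter (n_x0inv R).+1 x0_act s) = s.
Proof.
move=> + s1; elim/last_ind: R => [|R l IH]; first by rewrite /= x0_actK.
rewrite mem_rcons in_cons negb_or => /andP[l_x0 /IH act_R].
rewrite -rcons_cons /word_act foldr_rcons -/(word_act _ _).
have -> : n_x0inv (rcons R l) = n_x0inv R + (l == x0inv).
  by rewrite /n_x0inv -cats1 count_cat /= addn0.
case: l l_x0 => [[|n] e] l_x0.
  by case: e l_x0 => // _; rewrite addn1 iterS [gen_act _ _ _]/= x0_actK.
rewrite (_ : (n.+1, e) == x0inv = false) // addn0 gen_act_fix_head //.
exact: iter_x0_head.
Qed.

Lemma conjugate_nontrivial L u R q :
  x0inv \notin L -> x0 \notin R -> n_x0 L = n_x0inv R ->
  q 0 = false -> word_act u q <> q ->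
  exists2 s : stream, s 0 = false &
    word_act (rcons L x0 ++ shift_word u ++ x0inv :: R) s <> s.
Proof.
move=> L_x0inv R_x0 bal q0 uq.
exists (iter (n_x0inv R).+1 x0_act (scons true q)); first exact: iter_x0_head.
rewrite !word_act_cat word_act_suffix // word_act_shift.
have [s' [act_L s'1 s'_s]] := word_act_prefix (scons true (word_act u q)) L_x0inv.
rewrite act_L bal => /iter_x0_inj s'E.
have uq0 : word_act u q 0 = false by rewrite -[LHS]/(scons true (word_act u q) 1) -s'1 s'E.
by move: (s'_s uq0); rewrite s'E => /(congr1 stl) /esym.
Qed.

Lemma reduced_zero_nontrivial n w : size w <= n -> reduced w -> ~~ above 0 w ->
  exists2 q : stream, q 0 = false & word_act w q <> q.
Proof.
elim: n w => [|n IH] w size_w red_w w_zero.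
  by move: w_zero; rewrite leqn0 size_eq0 in size_w; move/eqP: size_w => ->.
have [bal|] := eqVneq (n_x0 w) (n_x0inv w); last exact: unbalanced_nontrivial.
have [_ no_neg no_pos] := red_w.
have [x0_w x0inv_w] : x0 \in w /\ x0inv \in w.
  rewrite -!has_pred1 !has_count; move: (n_x0_pos w_zero).
  by rewrite /n_x0 /n_x0inv in bal *; lia.
have [L [h [R [def_w L_x0inv h_pos R_x0]]]] := balanced_split no_neg x0_w x0inv_w.
have bal_LR : n_x0 L = n_x0inv R.
  move: bal; rewrite def_w /n_x0 /n_x0inv -cats1 !count_cat /=.
  rewrite (elimT count_memPn R_x0) (elimT count_memPn L_x0inv).
  by rewrite !(elimT count_memPn (above0_x0 _ h_pos)); lia.
set u := unshift_word h; have def_h : h = shift_word u by rewrite unshift_wordK.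
have u_zero : ~~ above 0 u.
  apply/negP => u_pos; apply: no_pos; exists L, h, R, 0.
  by rewrite def_h above_shift u_pos -def_h def_w cat_rcons.
have red_u : reduced u.
  apply: reduced_shift; rewrite -def_h.
  by apply: (reduced_sub (x := rcons L x0) (z := x0inv :: R)); rewrite -def_w.
have size_u : size u <= n.
  by move: size_w; rewrite size_map def_w !size_cat size_rcons /=; lia.
have [q q0 uq] := IH u size_u red_u u_zero.
by rewrite def_w def_h; exact: conjugate_nontrivial L_x0inv R_x0 bal_LR q0 uq.
Qed.

(* Every reduced word with an index at most k acts nontrivially; lowering the
   indices reduces to the case of a word containing x_0^(+-1). *)
Lemma reduced_nontrivial k w : reduced w -> ~~ above k w -> exists s, word_act w s <> s.
Proof.
elim: k w => [|k IH] w red_w w_k; have [w_pos|w_zero] := boolP (above 0 w).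
- by rewrite w_pos in w_k.
- by have [q _ wq] := reduced_zero_nontrivial (leqnn _) red_w w_zero; exists q.
- rewrite -(unshift_wordK w_pos) in red_w w_k *; rewrite above_shift in w_k.
  have [s us] := IH _ (reduced_shift red_w) w_k.
  by exists (scons true s); rewrite word_act_shift => /(congr1 stl).
- by have [q _ wq] := reduced_zero_nontrivial (leqnn _) red_w w_zero; exists q.
Qed.

Lemma alternating_pairs (T : Type) (s : seq T) (i j : T -> nat) (eps delta : T -> bool) :
  all (fun t => ~~ odd (i t) && odd (j t)) s ->
  alternating false
    (flatten [seq [:: gen_pow (i t) (eps t); gen_pow (j t) (delta t)] | t <- s]).
Proof. by elim: s => //= t s IH /andP[/andP[/negbTE -> ->] /IH]. Qed.

Theorem lemma3 (k : nat) (i j : nat -> nat) (eps delta : nat -> bool) :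
  1 <= k ->
  (forall t, t < k -> ~~ odd (i t)) ->
  (forall t, t < k -> odd (j t)) ->
  ~ represents_identity
      (flatten [seq [:: gen_pow (i t) (eps t); gen_pow (j t) (delta t)]
               | t <- iota 0 k]).
Proof.
move=> k_gt0 i_even j_odd W_id; set W := flatten _ in W_id.
have alt_W : alternating false W.
  apply: alternating_pairs; apply/allP => t; rewrite mem_iota add0n => /andP[_ t_k].
  by rewrite i_even ?j_odd.
have W_ne : W <> [::] by rewrite /W; case: k k_gt0 {i_even j_odd W_id alt_W W}.
have [w [red_w w_ne act_w]] := reduce (leqnn _) (ex_intro _ false alt_W) W_ne.
have w_head : ~~ above (head x0 w).1 w by case: w w_ne {red_w act_w} => //= l w _; rewrite ltnn.
have [s ws] := reduced_nontrivial red_w w_head.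
by apply: ws; rewrite act_w (word_act_Fequiv W_id).
Qed.
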